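(* Let $\mathcal{REP}$ be the category of finite-dimensional modules over $\Bbbk[x_1,x_2]$. Then $\mathrm{fpdim}(\mathcal{REP})=2$.
   Context: $\Bbbk$ is algebraically closed. For a $\Bbbk$-linear abelian category $\mathcal C$: a brick is an object $M$ with $\mathrm{Hom}_{\mathcal C}(M,M)=\Bbbk$; a brick set is a finite set $\phi=\{X_1,\dots,X_n\}$ of bricks with $\dim\mathrm{Hom}_{\mathcal C}(X_i,X_j)=\delta_{ij}$; its adjacency matrix is $C(\phi)=(\dim\mathrm{Ext}^1_{\mathcal C}(X_i,X_j))_{i,j}$; $\mathrm{fpdim}(\mathcal C)=\sup\{\rho(C(\phi)):\phi\text{ a brick set}\}$, $\rho$ the spectral radius. *)

From HB Require Import structures.
From mathcomp Require Import all_boot all_order all_algebra all_field.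
Set Implicit Arguments. Unset Strict Implicit. Unset Printing Implicit Defensive.
Import Order.TTheory GRing.Theory Num.Theory.
Local Open Scope ring_scope.

(* A finite-dimensional module over F[x1,x2]: the space F^n (row vectors),
   with x1, x2 acting by right multiplication by commuting matrices. *)
Record fdmod (F : fieldType) := FDMod {
  fd_dim : nat;
  act1 : 'M[F]_fd_dim;
  act2 : 'M[F]_fd_dim;
  act_comm : act1 *m act2 = act2 *m act1 }.

Section Dims.
Variable F : fieldType.
Implicit Types M N : fdmod F.

(* delta X = (A1 X - X B1, A2 X - X B2); its kernel is Hom(M,N) (a row-vector
   map v |-> v X is a module map iff A_i X = X B_i); its image is the space of
   coboundaries (trivial extensions) in the extension description of Ext^1. *)
Definition fd_delta M N (X : 'M[F]_(fd_dim M, fd_dim N)) : 'M[F]_(fd_dim M, fd_dim N + fd_dim N) :=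
  row_mx (act1 M *m X - X *m act1 N) (act2 M *m X - X *m act2 N).

(* An extension 0 -> N -> E -> M -> 0 has E = F^(n+m) with x_i acting by
   block_mx (act_i N) 0 D_i (act_i M); commutativity of these matrices is
   D1 B2 + A1 D2 = D2 B1 + A2 D1 (the cocycle condition). *)
Definition fd_cocyc M N (D : 'M[F]_(fd_dim M, fd_dim N + fd_dim N)) : 'M[F]_(fd_dim M, fd_dim N) :=
  (lsubmx D *m act2 N + act1 M *m rsubmx D) - (rsubmx D *m act1 N + act2 M *m lsubmx D).

Definition dimHom M N : nat :=
  (fd_dim M * fd_dim N - \rank (lin_mx (@fd_delta M N)))%N.

(* dim_k Ext^1(M,N) = dim (cocycles) - dim (coboundaries) *)
Definition dimExt1 M N : nat :=
  ((fd_dim M * (fd_dim N + fd_dim N) - \rank (lin_mx (@fd_cocyc M N)))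
    - \rank (lin_mx (@fd_delta M N)))%N.

Definition is_brick M : Prop := dimHom M M = 1%N.

Definition is_brick_set k (X : 'I_k -> fdmod F) : Prop :=
  (forall i, is_brick (X i)) /\
  (forall i j, dimHom (X i) (X j) = (i == j : nat)).

Definition adjacency k (X : 'I_k -> fdmod F) : 'M[algC]_k :=
  \matrix_(i, j) (dimExt1 (X i) (X j))%:R.
End Dims.

Definition is_spectral_radius n (A : 'M[algC]_n) (r : algC) : Prop :=
  (forall l, eigenvalue A l -> `|l| <= r) /\
  (if n is 0 then r = 0 else exists2 l, eigenvalue A l & `|l| = r).

Definition fpdim_REP_is (F : fieldType) (v : algC) : Prop :=
  (forall k (X : 'I_k -> fdmod F) r, is_brick_set X ->
      is_spectral_radius (adjacency X) r -> r <= v) /\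
  (forall e : algC, 0 < e -> exists k (X : 'I_k -> fdmod F) r,
      [/\ is_brick_set X, is_spectral_radius (adjacency X) r & v - e < r]).

From HB Require Import structures.
From mathcomp Require Import all_boot all_order all_algebra all_field.
Set Implicit Arguments. Unset Strict Implicit. Unset Printing Implicit Defensive.
Import Order.TTheory GRing.Theory Num.Theory.
Local Open Scope ring_scope.

(* A brick has only scalar endomorphisms; as x1 and x2 act by endomorphisms,
   they act by scalars, so every matrix is an endomorphism and a brick is
   one-dimensional, i.e. a point a of k^2.  Between such modules Hom is k or 0
   and Ext^1 is k^2 or 0 according as the points agree, so the adjacency matrix
   of every brick set is 2 I, of spectral radius 2. *)

Lemma lin_mx_rank0P (F : fieldType) m1 n1 m2 n2
    (f : {linear 'M[F]_(m1, n1) -> 'M[F]_(m2, n2)}) :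
  reflect (forall X, f X = 0) (\rank (lin_mx f) == 0)%N.
Proof.
rewrite mxrank_eq0; apply: (iffP eqP) => [f0 X | f0].
  by apply/eqP; rewrite -mxvec_eq0 -mul_vec_lin f0 mulmx0.
apply/row_matrixP => i; rewrite row0 rowE -[delta_mx 0 i]vec_mxK mul_vec_lin.
by rewrite f0 linear0.
Qed.

Section CommDefect.
Variable F : fieldType.

Definition comm_defect m p (A : 'M[F]_m) (B : 'M[F]_p) (X : 'M[F]_(m, p)) :=
  A *m X - X *m B.

Lemma comm_defect_is_linear m p (A : 'M[F]_m) (B : 'M[F]_p) :
  linear (comm_defect A B).
Proof.
move=> a X Y; rewrite /comm_defect mulmxDr mulmxDl -scalemxAr -scalemxAl.
by rewrite scalerBr opprD addrACA.
Qed.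

HB.instance Definition _ m p (A : 'M[F]_m) (B : 'M[F]_p) :=
  GRing.isLinear.Build F _ _ _ (comm_defect A B) (comm_defect_is_linear A B).

Lemma comm_defect_scalar m p (c d : F) (X : 'M[F]_(m, p)) :
  comm_defect c%:M d%:M X = (c - d) *: X.
Proof. by rewrite /comm_defect mul_scalar_mx mul_mx_scalar scalerBl. Qed.

End CommDefect.

Section Linearity.
Variables (F : fieldType) (M N : fdmod F).

Lemma fd_deltaE X : @fd_delta F M N X =
  row_mx (comm_defect (act1 M) (act1 N) X) (comm_defect (act2 M) (act2 N) X).
Proof. by []. Qed.

Lemma fd_cocycE D : @fd_cocyc F M N D =
  ((comm_defect (act1 M) (act1 N) \o rsubmx)
    \- (comm_defect (act2 M) (act2 N) \o lsubmx)) D.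
Proof.
by rewrite /fd_cocyc /comm_defect /= opprB opprD (addrC (lsubmx D *m _)) addrACA.
Qed.

Lemma fd_delta_is_linear : linear (@fd_delta F M N).
Proof. by move=> a X Y; rewrite !fd_deltaE scale_row_mx add_row_mx !linearP. Qed.

Lemma fd_cocyc_is_linear : linear (@fd_cocyc F M N).
Proof. by move=> a D E; rewrite !fd_cocycE linearP. Qed.

End Linearity.

HB.instance Definition _ (F : fieldType) (M N : fdmod F) :=
  GRing.isLinear.Build F _ _ _ (@fd_delta F M N) (@fd_delta_is_linear F M N).
HB.instance Definition _ (F : fieldType) (M N : fdmod F) :=
  GRing.isLinear.Build F _ _ _ (@fd_cocyc F M N) (@fd_cocyc_is_linear F M N).

Section LineModules.
Variable F : fieldType.
Implicit Types a b : F * F.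

Definition line_mod a : fdmod F :=
  @FDMod F 1 a.1%:M a.2%:M (scalar_mxC a.2 a.1%:M).

Lemma fd_delta_line_eq0 a b :
  (forall X, @fd_delta F (line_mod a) (line_mod b) X = 0) <-> a = b.
Proof.
split=> [delta0 | <- X]; last first.
  by rewrite fd_deltaE !comm_defect_scalar !subrr !scale0r row_mx0.
have /eqP := delta0 1%:M; rewrite fd_deltaE !comm_defect_scalar.
rewrite row_mx_eq0 !scaler_eq0 !oner_eq0 !orbF !subr_eq0 => /andP[/eqP e1 /eqP e2].
exact: injective_projections.
Qed.

Lemma fd_cocyc_line_eq0 a b :
  (forall D, @fd_cocyc F (line_mod a) (line_mod b) D = 0) <-> a = b.
Proof.
have cocycE D : @fd_cocyc F (line_mod a) (line_mod b) D =
    (a.1 - b.1) *: rsubmx D - (a.2 - b.2) *: lsubmx D.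
  by rewrite fd_cocycE /= !comm_defect_scalar.
split=> [cocyc0 | ab D]; last by rewrite cocycE ab !subrr !scale0r subrr.
have /eqP := cocyc0 (row_mx 0 1%:M); have /eqP := cocyc0 (row_mx 1%:M 0).
rewrite !cocycE !row_mxKl !row_mxKr !scaler0 sub0r subr0 oppr_eq0.
rewrite !scaler_eq0 !oner_eq0 !orbF !subr_eq0 => /eqP e2 /eqP e1.
exact: injective_projections.
Qed.

Lemma dimHom_line a b : dimHom (line_mod a) (line_mod b) = (a == b).
Proof.
rewrite /dimHom; have [<- | neq] := eqVneq a b.
  by have /lin_mx_rank0P/eqP -> := proj2 (fd_delta_line_eq0 a a) erefl.
apply/eqP; rewrite subn_eq0 lt0n; apply: contra neq => /lin_mx_rank0P.
by move/fd_delta_line_eq0 => ->.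
Qed.

Lemma dimExt1_line a b : dimExt1 (line_mod a) (line_mod b) = (2 * (a == b))%N.
Proof.
rewrite /dimExt1; have [<- | neq] := eqVneq a b.
  have /lin_mx_rank0P/eqP -> := proj2 (fd_delta_line_eq0 a a) erefl.
  by have /lin_mx_rank0P/eqP -> := proj2 (fd_cocyc_line_eq0 a a) erefl.
have rank_delta_gt0 : (0 < \rank (lin_mx (@fd_delta F (line_mod a) (line_mod b))))%N.
  by rewrite lt0n; apply: contra neq => /lin_mx_rank0P/fd_delta_line_eq0 ->.
have rank_cocyc_gt0 : (0 < \rank (lin_mx (@fd_cocyc F (line_mod a) (line_mod b))))%N.
  by rewrite lt0n; apply: contra neq => /lin_mx_rank0P/fd_cocyc_line_eq0 ->.
by apply/eqP; rewrite subn_eq0 leq_subLR (leq_add rank_cocyc_gt0 rank_delta_gt0).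
Qed.

End LineModules.

Section Bricks.
Variables (F : fieldType) (M : fdmod F).

Lemma fd_delta_scalar c : @fd_delta F M M c%:M = 0.
Proof. by rewrite fd_deltaE /comm_defect !scalar_mxC !subrr row_mx0. Qed.

Lemma brick_endo_scalar X :
  is_brick M -> @fd_delta F M M X = 0 -> exists c, X = c%:M.
Proof.
move=> brickM deltaX; set L := lin_mx (@fd_delta F M M).
have rank_ker : \rank (kermx L) = 1%N by rewrite mxrank_ker.
have dim_gt0 : (0 < fd_dim M)%N.
  by have := rank_leq_row (kermx L); rewrite rank_ker muln_gt0 andbb.
set u := mxvec (1%:M : 'M[F]_(fd_dim M)).
have u_ker : (u <= kermx L)%MS.
  by apply/sub_kermxP; rewrite mul_vec_lin /= fd_delta_scalar linear0.
have rank_u : \rank u = 1%N.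
  by rewrite rank_rV mxvec_eq0 -mxrank_eq0 mxrank1 -lt0n dim_gt0.
have ker_u : (kermx L <= u)%MS by rewrite -(mxrank_leqif_sup u_ker) rank_ker rank_u.
have /sub_rVP[c Xc] : (mxvec X <= u)%MS.
  by apply: submx_trans ker_u; apply/sub_kermxP; rewrite mul_vec_lin /= deltaX linear0.
by exists c; apply: (can_inj mxvecK); rewrite Xc -linearZ scalemx1.
Qed.

Lemma brick_act_scalar :
  is_brick M -> exists a : F * F, act1 M = a.1%:M /\ act2 M = a.2%:M.
Proof.
move=> brickM.
have [c1 ->] : exists c, act1 M = c%:M.
  by apply: brick_endo_scalar brickM _; rewrite fd_deltaE /comm_defect act_comm !subrr row_mx0.
have [c2 ->] : exists c, act2 M = c%:M.
  by apply: brick_endo_scalar brickM _; rewrite fd_deltaE /comm_defect act_comm !subrr row_mx0.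
by exists (c1, c2).
Qed.

End Bricks.

Lemma brick_line (F : fieldType) (M : fdmod F) :
  is_brick M -> exists a, M = line_mod a.
Proof.
move=> brickM; have [a [actM1 actM2]] := brick_act_scalar brickM.
have /lin_mx_rank0P/eqP rank0 : forall X, @fd_delta F M M X = 0.
  by move=> X; rewrite fd_deltaE actM1 actM2 !comm_defect_scalar !subrr !scale0r row_mx0.
have /eqP := brickM; rewrite /dimHom rank0 subn0 muln_eq1 andbb => /eqP.
case: M actM1 actM2 {brickM rank0} => n A1 A2 A12 /= actM1 actM2 dim1.
subst n A1 A2; by exists a; congr FDMod; apply: eq_irrelevance.
Qed.

Lemma adjacency_brick_set (F : fieldType) k (X : 'I_k -> fdmod F) :
  is_brick_set X -> adjacency X = 2%:M.
Proof.
case=> bricks homs; apply/matrixP => i j; rewrite !mxE; have := homs i j.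
have [a ->] := brick_line (bricks i); have [b ->] := brick_line (bricks j).
by rewrite dimExt1_line dimHom_line => ->; case: (i == j).
Qed.

Lemma eigenvalue_scalar_mx (F : fieldType) n (c l : F) :
  eigenvalue (c%:M : 'M[F]_n.+1) l = (l == c).
Proof.
apply/eigenvalueP/eqP => [[v] | ->].
  rewrite mul_mx_scalar => /eqP; rewrite -subr_eq0 -scalerBl scaler_eq0 subr_eq0.
  by case/orP=> [/eqP -> | /eqP -> /eqP].
exists (const_mx 1); first by rewrite mul_mx_scalar.
by apply/eqP => /matrixP /(_ 0 0) /eqP; rewrite !mxE oner_eq0.
Qed.

Lemma is_spectral_radius_scalar n (c r : algC) :
  is_spectral_radius (c%:M : 'M_n.+1) r <-> r = `|c|.
Proof.
split=> [[_ [l]] | ->]; first by rewrite eigenvalue_scalar_mx => /eqP -> ->.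
split=> [l | ]; first by rewrite eigenvalue_scalar_mx => /eqP ->.
by exists c; rewrite ?eigenvalue_scalar_mx.
Qed.

Theorem theorem7p4 (F : closedFieldType) : fpdim_REP_is F 2.
Proof.
split=> [k X r /adjacency_brick_set -> | e e_gt0].
  case: k {X} => [[_ ->] | k /is_spectral_radius_scalar ->]; first exact: ler0n.
  by rewrite normr_nat.
pose X : 'I_1 -> fdmod F := fun=> line_mod (0, 0).
have bricksX : is_brick_set X.
  by split=> [i | i j]; rewrite /is_brick dimHom_line eqxx // !ord1.
exists 1%N, X, 2; split=> //; last by rewrite gtrBl.
by rewrite adjacency_brick_set //; apply/is_spectral_radius_scalar; rewrite normr_nat.
Qed.
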